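(* Let $G=(V,E)$ be a (directed) graph with source $s$ from which every vertex is reachable, let $w$ be a set of positive edge weights (with no two vertices equidistant from $s$), and let $m_f$ be the number of forward edges for $w$. Then for any linear decision tree solving the distance ordering problem on $(G,s)$, there exists a (possibly different) set of edge weights $\overline{w}$ for which the decision tree performs $\Omega(m_f)$ comparisons.
   Context: The distance ordering problem: given edge weights, output the vertices of $V\setminus\{s\}$ ordered by shortest-path distance from $s$. A linear decision tree is a decision tree in which each internal node compares a linear combination (with real coefficients) of the edge weights against $0$, branching on the outcome, and each leaf specifies an output. Run Dijkstra's algorithm on $(G,s,w)$ (pop the minimum-key vertex $u$; for each edge $(u,v)$, push $v$ with key distance$[u]+w(u,v)$ if $v$ is undiscovered, or decrease its key if smaller); for each $x\in V\setminus\{s\}$ the edge $(u,x)$ whose inspection pushed $x$ is unique, and these edges form a spanning tree $T$ rooted at $s$. A directed edge $(u,v)$ is a forward edge if $d(s,v)>d(s,u)$ and $(v,u)\notin T$, where $d$ is the shortest-path distance under $w$. *)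

From Stdlib Require Import ClassicalEpsilon.
From mathcomp Require Import all_boot all_order all_algebra.
From mathcomp Require Import reals.
Set Implicit Arguments. Unset Strict Implicit. Unset Printing Implicit Defensive.
Import Order.TTheory GRing.Theory Num.Theory.
Local Open Scope ring_scope.

Section Graph.
Variables (R : realType) (V : finType) (E : rel V) (s : V).

(* Edge weights: a real number for each ordered pair; only pairs (u,v)
   with E u v are edges, other values are irrelevant. *)
Definition weights := V * V -> R.

Definition positive_weights (w : weights) : Prop :=
  forall u v, E u v -> 0 < w (u, v).

Definition walk_weight (w : weights) (p : seq V) : R :=
  \sum_(e <- zip (s :: p) p) w e.

Definition is_dist (w : weights) (v : V) (d : R) : Prop :=
  (exists p, path E s p /\ last s p = v /\ walk_weight w p = d) /\
  (forall p, path E s p -> last s p = v -> d <= walk_weight w p).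

(* d(s, v) under w (chosen by classical description; well defined when
   v is reachable and weights are positive) *)
Definition dist (w : weights) (v : V) : R :=
  epsilon (inhabits 0) (fun d => is_dist w v d).

Definition all_reachable : Prop := forall v, connect E s v.

Definition distinct_distances (w : weights) : Prop := injective (dist w).

(* Edge (u,x) of the Dijkstra tree T: the edge whose inspection pushed x,
   i.e. x <> s and u is the in-neighbour of x popped first (smallest
   distance). *)
Definition dijkstra_tree_edge (w : weights) (u x : V) : bool :=
  [&& x != s, E u x & [forall u', E u' x ==> (dist w u <= dist w u')]].

Definition forward_edge (w : weights) (u v : V) : bool :=
  [&& E u v, dist w u < dist w v & ~~ dijkstra_tree_edge w u v].

Definition m_f (w : weights) : nat :=
  #|[set e : V * V | forward_edge w e.1 e.2]|.

Definition correct_ordering (w : weights) (out : seq V) : Prop :=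
  perm_eq out (enum [set~ s]) /\ sorted (fun x y => dist w x < dist w y) out.

End Graph.

(* Linear decision trees over edge weights: each internal node compares the
   linear combination sum_{e in E} a e * w e against 0 (three-way outcome
   <, =, >); leaves carry an output ordering. *)
Inductive ldt (R : Type) (V : Type) : Type :=
| Leaf of seq V
| Node of (V * V -> R) & ldt R V & ldt R V & ldt R V.

Section LDT.
Variables (R : realType) (V : finType) (E : rel V).

Definition lin_form (a w : V * V -> R) : R :=
  \sum_(e : V * V | E e.1 e.2) a e * w e.

Fixpoint ldt_output (t : ldt R V) (w : V * V -> R) : seq V :=
  match t with
  | Leaf o => o
  | Node a tl te tg =>
      let x := lin_form a w in
      if x < 0 then ldt_output tl w
      else if x == 0 then ldt_output te w else ldt_output tg w
  end.

Fixpoint ldt_comparisons (t : ldt R V) (w : V * V -> R) : nat :=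
  match t with
  | Leaf _ => 0
  | Node a tl te tg =>
      let x := lin_form a w in
      (if x < 0 then ldt_comparisons tl w
       else if x == 0 then ldt_comparisons te w
       else ldt_comparisons tg w).+1
  end.

Definition solves_distance_ordering (s : V) (t : ldt R V) : Prop :=
  forall w : V * V -> R, positive_weights E w -> distinct_distances E s w ->
    correct_ordering E s w (ldt_output t w).

End LDT.

(* Rank the vertices by their distance from s under w and put
   W(a,b) = h(b) - h(a) with h(x) = 4^rank(x) - 1 on rank-increasing edges and a
   huge weight on the others, so that the distance of x under W is h(x).  Every
   forward edge either skips a rank ("long" edge) or can be charged injectively
   to the long Dijkstra-tree edge entering its head, so m_f is at most the
   number of long edges.  Split the long edges T by the parity of the rank of
   their head.  If the tree made fewer than |T| comparisons on W, some nonzero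
   y supported on T would be orthogonal to every form it queries, and the tree
   would answer identically on all inputs W + c y.  Scale y so that W + k y is
   nonnegative, at most 2W and zero on some (u,v) in T: then v gets closer
   than the vertex x of rank rank(v) - 1, whose incoming edges y does not touch
   by parity.  A suitable interpolation between W and W + k y is a valid input
   on which x and v are ordered differently than under W, which is absurd.
   Hence m_f <= 2 * comparisons(W). *)

From Stdlib Require Import ClassicalEpsilon.
From mathcomp Require Import all_boot all_order all_algebra reals.
From mathcomp Require Import ring lra zify.
Set Implicit Arguments. Unset Strict Implicit. Unset Printing Implicit Defensive.
Import Order.TTheory GRing.Theory Num.Theory.
Local Open Scope ring_scope.

Lemma exists_seq_argmin (T : eqType) (R : realDomainType) (f : T -> R) (l : seq T) x0 :
  x0 \in l -> exists2 x, x \in l & forall y, y \in l -> f x <= f y.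
Proof.
elim: l x0 => [|a l IH] x0 // _; case: l IH => [|b l] IH.
  by exists a; rewrite ?mem_head // => y; rewrite inE => /eqP->.
have [x x_l min_x] := IH b (mem_head _ _).
have [le_ax|lt_xa] := lerP (f a) (f x).
  exists a; rewrite ?mem_head // => y; rewrite in_cons => /predU1P[->//|y_l].
  exact: le_trans le_ax (min_x _ y_l).
exists x; first by rewrite in_cons x_l orbT.
by move=> y; rewrite in_cons => /predU1P[->|/min_x]; [apply: ltW|].
Qed.

Lemma exists_cancelling_scale (R : realFieldType) (I : finType) (f y : I -> R) :
  (forall i, 0 < f i) -> (exists i, y i != 0) ->
  exists k i, [/\ y i != 0, f i + k * y i = 0
                & forall j, 0 <= f j + k * y j <= 2 * f j].
Proof.
move=> f_gt0 [i0 y_i0].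
have [i _ max_i] := arg_maxP (fun j => `|y j| / f j) (isT : xpredT i0).
have y_i : y i != 0.
  apply: contraTneq (max_i i0 isT) => ->.
  by rewrite normr0 mul0r -ltNge divr_gt0 ?normr_gt0 ?f_gt0.
exists (- f i / y i), i; split => // [|j].
  by rewrite !mulNr divfK // subrr.
have : `|- f i / y i * y j| <= f j.
  rewrite !normrM normrN normfV (gtr0_norm (f_gt0 i)) mulrAC ler_pdivrMr ?normr_gt0 //.
  have := max_i j isT; rewrite /= ler_pdivrMr ?f_gt0 // mulrAC ler_pdivlMr ?f_gt0 //.
  by rewrite [_ * f i]mulrC [_ * `|y i|]mulrC.
by rewrite ler_norml => /andP[? ?]; apply/andP; split; lra.
Qed.

Lemma exists_points_between (R : realFieldType) (a : R) n : a < 1 ->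
  exists lam : 'I_n -> R, injective lam /\ forall i, a < lam i < 1.
Proof.
move=> a_lt1; have gap : 0 < 1 - a by rewrite subr_gt0.
pose frac (i : 'I_n) : R := i.+1%:R / n.+1%:R.
have frac_in i : 0 < frac i < 1.
  by rewrite divr_gt0 ?ltr0n //= ltr_pdivrMr ?ltr0n // mul1r ltr_nat ltnS.
exists (fun i => a + (1 - a) * frac i); split.
  move=> i j /addrI /mulfI eq_frac.
  have /eq_frac : 1 - a != 0 by rewrite gt_eqF.
  move=> /mulIf; rewrite invr_eq0 pnatr_eq0 => /(_ isT) /eqP.
  by rewrite eqr_nat eqSS => /eqP /val_inj.
move=> i; have /andP[fr_gt0 fr_lt1] := frac_in i.
have : 0 < (1 - a) * frac i by rewrite mulr_gt0.
have : 0 < (1 - a) * (1 - frac i) by rewrite mulr_gt0 // subr_gt0.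
by move=> *; apply/andP; split; lra.
Qed.

Lemma exists_injective_interpolation (R : realFieldType) (I : finType) (f g : I -> R) l0 :
  injective f -> l0 < 1 ->
  exists l, [/\ l0 < l, l < 1 & injective (fun x => (1 - l) * f x + l * g x)].
Proof.
move=> f_inj l0_lt1; set h := fun l x => (1 - l) * f x + l * g x.
have collision_unique l1 l2 a c : a != c ->
    h l1 a = h l1 c -> h l2 a = h l2 c -> l1 = l2.
  move=> /(contra_neq (@f_inj a c)); rewrite -subr_eq0 /h => fac h1 h2.
  have : (l1 - l2) * ((g a - g c) - (f a - f c)) = 0 by lra.
  move/eqP; rewrite mulf_eq0 subr_eq0 => /orP[/eqP //|/eqP slope0].
  have : f a - f c = - l1 * ((g a - g c) - (f a - f c)) by lra.
  by rewrite slope0 mulr0 => /eqP; rewrite (negbTE fac).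
have [lam [lam_inj lam_in]] := exists_points_between #|{: I * I}|.+1 l0_lt1.
suff [i /injectiveP h_inj] : exists i, injectiveb (h (lam i)).
  by have /andP[? ?] := lam_in i; exists (lam i).
apply/existsP; apply: contraT => /existsPn /(_ _) /injectivePn all_coll.
have /fin_all_exists[pair pairP] i : exists p : I * I,
    p.1 != p.2 /\ h (lam i) p.1 = h (lam i) p.2.
  by have [a [c ac hac]] := all_coll i; exists (a, c).
have pair_inj : injective pair.
  move=> i j eq_ij; have [ac hi] := pairP i; have [_] := pairP j.
  by rewrite -eq_ij => /(collision_unique _ _ _ _ ac hi) /lam_inj.
by have := leq_card pair pair_inj; rewrite card_ord ltnn.
Qed.

Section Walks.
Variables (R : realType) (V : finType) (E : rel V).
Implicit Types (w : weights R V) (x : V) (p : seq V).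

Lemma walk_weight_nil w x : walk_weight x w [::] = 0.
Proof. by rewrite /walk_weight big_nil. Qed.

Lemma walk_weight_cons w x y p :
  walk_weight x w (y :: p) = w (x, y) + walk_weight y w p.
Proof. by rewrite /walk_weight big_cons. Qed.

Lemma walk_weight_cat w x p1 p2 :
  walk_weight x w (p1 ++ p2) = walk_weight x w p1 + walk_weight (last x p1) w p2.
Proof.
elim: p1 x => [|y p1 IH] x /=; first by rewrite walk_weight_nil add0r.
by rewrite !walk_weight_cons IH addrA.
Qed.

Lemma walk_weight_rcons w x p y :
  walk_weight x w (rcons p y) = walk_weight x w p + w (last x p, y).
Proof. by rewrite -cats1 walk_weight_cat walk_weight_cons walk_weight_nil addr0. Qed.

Lemma eq_walk_weight w1 w2 x p : w1 =1 w2 -> walk_weight x w1 p = walk_weight x w2 p.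
Proof. by move=> eq_w; apply: eq_bigr => e _; apply: eq_w. Qed.

Lemma ler_walk_weight w1 w2 x p :
  (forall e, w1 e <= w2 e) -> walk_weight x w1 p <= walk_weight x w2 p.
Proof. by move=> le_w; apply: ler_sum => e _; apply: le_w. Qed.

Lemma walk_weight_comb (a b : R) w1 w2 x p :
  walk_weight x (fun e => a * w1 e + b * w2 e) p =
  a * walk_weight x w1 p + b * walk_weight x w2 p.
Proof. by rewrite /walk_weight big_split /= -!mulr_sumr. Qed.

Lemma walk_weight_scale (a : R) w x p :
  walk_weight x (fun e => a * w e) p = a * walk_weight x w p.
Proof. by rewrite /walk_weight mulr_sumr. Qed.

Lemma walk_weight_telescope (h : V -> R) (r : rel V) w x p :
  (forall a b, r a b -> w (a, b) = h b - h a) -> path r x p ->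
  walk_weight x w p = h (last x p) - h x.
Proof.
move=> w_diff; elim: p x => [|y p IH] x /=; first by rewrite walk_weight_nil subrr.
case/andP=> /w_diff xy /IH; rewrite walk_weight_cons xy => ->.
by rewrite addrC addrA subrK.
Qed.

Lemma walk_weight_ge_potential (h : V -> R) w x p :
  (forall a b, E a b -> h b <= h a + w (a, b)) -> path E x p ->
  h (last x p) - h x <= walk_weight x w p.
Proof.
move=> h_pot; elim: p x => [|y p IH] x /=; first by rewrite walk_weight_nil subrr.
case/andP=> /h_pot h_xy /IH h_p; rewrite walk_weight_cons.
by rewrite -(subrK (h y) (h (last y p))) -addrA addrC lerD // lerBlDl.
Qed.

Definition nonneg_weights w := forall a b, E a b -> 0 <= w (a, b).

Lemma walk_weight_ge0 w x p :
  nonneg_weights w -> path E x p -> 0 <= walk_weight x w p.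
Proof.
move=> w_ge0; elim: p x => [|y p IH] x /=; first by rewrite walk_weight_nil.
by case/andP=> xy p_path; rewrite walk_weight_cons addr_ge0 ?w_ge0 ?IH.
Qed.

Lemma path_of_light_walk w (r : rel V) (c : R) x p : nonneg_weights w ->
  (forall a b, E a b -> w (a, b) < c -> r a b) ->
  path E x p -> walk_weight x w p < c -> path r x p.
Proof.
move=> w_ge0 light_r; elim: p x => [|y p IH] x //= /andP[xy p_path].
rewrite walk_weight_cons => lt_c.
have := walk_weight_ge0 w_ge0 p_path; have := w_ge0 _ _ xy => xy_ge0 p_ge0.
by apply/andP; split; [apply: light_r | apply: IH]; rewrite //; lra.
Qed.

Lemma shorten_walk w x p : nonneg_weights w -> path E x p ->
  exists q, [/\ path E x q, last x q = last x p, uniq (x :: q)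
              & walk_weight x w q <= walk_weight x w p].
Proof.
move=> w_ge0; elim: p x => [|y p IH] x /=.
  by move=> _; exists [::]; rewrite /= walk_weight_nil.
case/andP=> xy /IH[q [q_path q_last q_uniq le_q]].
have yq_path : path E x (y :: q) by rewrite /= xy.
have le_yq : walk_weight x w (y :: q) <= walk_weight x w (y :: p).
  by rewrite !walk_weight_cons lerD2l.
have yq_last : last x (y :: q) = last y p by [].
have [x_yq|x_yq] := boolP (x \in y :: q); last first.
  by exists (y :: q); split; rewrite //= x_yq.
case/splitPr: x_yq yq_path le_yq q_uniq yq_last => q1 q2.
rewrite cat_path last_cat /= => /and3P[q1_path q1_x q2_path] le_q12 q_uniq <-.
exists q2; split => //.
- by move: q_uniq; rewrite cat_uniq => /and3P[].
- apply: le_trans le_q12; rewrite walk_weight_cat walk_weight_cons addrA lerDr.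
  by rewrite addr_ge0 ?(walk_weight_ge0 _ q1_path) ?w_ge0.
Qed.

Fixpoint seqs_upto (k : nat) : seq (seq V) :=
  if k is k'.+1 then [::] :: [seq x :: p | x <- enum V, p <- seqs_upto k']
  else [:: [::]].

Lemma mem_seqs_upto k p : (size p <= k)%N -> p \in seqs_upto k.
Proof.
elim: k p => [|k IH] [|x p] //=; rewrite ?mem_head // ltnS => /IH p_k.
by rewrite in_cons; apply/orP; right; apply: allpairs_f; rewrite ?mem_enum.
Qed.

Variable s : V.

Lemma exists_shortest_walk w v : nonneg_weights w -> connect E s v ->
  exists p, [/\ path E s p, last s p = v &
    forall q, path E s q -> last s q = v -> walk_weight s w p <= walk_weight s w q].
Proof.
move=> w_ge0 /connectP[p0 p0_path p0_last].
pose walks := [seq q <- seqs_upto #|V| | path E s q && (last s q == v)].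
have shorten_in_walks q : path E s q -> last s q = v ->
    exists2 q', q' \in walks & walk_weight s w q' <= walk_weight s w q.
  move=> /(shorten_walk w_ge0)[q' [q'_path q'_last q'_uniq le_q']] q_last.
  exists q' => //; rewrite mem_filter q'_path q'_last q_last eqxx mem_seqs_upto //.
  by apply: ltnW; have := max_card (mem (s :: q')); rewrite (card_uniqP q'_uniq).
have [q0 q0_walks _] := shorten_in_walks _ p0_path (esym p0_last).
have [p p_walks min_p] := exists_seq_argmin (walk_weight s w) q0_walks.
move: p_walks; rewrite mem_filter => /andP[/andP[p_path /eqP p_last] _].
exists p; split=> // q q_path /(shorten_in_walks _ q_path)[q' /min_p le_pq' le_q'].
exact: le_trans le_pq' le_q'.
Qed.

Lemma is_dist_dist w v d : is_dist E s w v d -> dist E s w v = d.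
Proof.
move=> d_dist; have : is_dist E s w v (dist E s w v).
  by rewrite /dist; apply: epsilon_spec; exists d.
case: d_dist => [[p [p_path [p_last <-]]] min_d] [[q [q_path [q_last <-]]] min_q].
by apply/le_anti; rewrite min_q ?min_d.
Qed.

Lemma dist_spec w v : nonneg_weights w -> connect E s v ->
  is_dist E s w v (dist E s w v).
Proof.
move=> w_ge0 /(exists_shortest_walk w_ge0)[p [p_path p_last min_p]].
by rewrite (@is_dist_dist w v (walk_weight s w p)) //; split=> //; exists p.
Qed.

End Walks.

Section DecisionTrees.
Variables (R : realType) (V : finType) (E : rel V).
Implicit Types (t : ldt R V) (w y : V * V -> R).

Fixpoint queries t w : seq (V * V -> R) :=
  match t with
  | Leaf _ => [::]
  | Node a tl te tg =>
      let x := lin_form E a w in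
      a :: (if x < 0 then queries tl w
            else if x == 0 then queries te w else queries tg w)
  end.

Lemma size_queries t w : size (queries t w) = ldt_comparisons E t w.
Proof.
elim: t => [o|a tl IHl te IHe tg IHg] //=.
by case: ifP => _; [rewrite IHl | case: ifP => _; [rewrite IHe | rewrite IHg]].
Qed.

Lemma lin_form_shift a w y (c : R) :
  lin_form E a (fun e => w e + c * y e) = lin_form E a w + c * lin_form E a y.
Proof.
rewrite /lin_form mulr_sumr -big_split; apply: eq_bigr => e _.
by rewrite mulrDr mulrCA.
Qed.

Lemma ldt_output_shift t w y (c : R) :
  (forall j, (j < size (queries t w))%N ->
     lin_form E (nth (fun=> 0) (queries t w) j) y = 0) ->
  ldt_output E t (fun e => w e + c * y e) = ldt_output E t w.
Proof.
elim: t => [o|a tl IHl te IHe tg IHg] //= y_ker.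
rewrite lin_form_shift (y_ker 0%N) // mulr0 addr0.
have {}y_ker j := y_ker j.+1.
case: ifP y_ker => _ y_ker; first exact: IHl.
by case: ifP y_ker => _ y_ker; [apply: IHe | apply: IHg].
Qed.

Lemma exists_kernel_weights (F : seq (V * V -> R)) (T : {set V * V}) :
  {in T, forall e, E e.1 e.2} -> (size F < #|T|)%N ->
  exists y, [/\ forall e, e \notin T -> y e = 0, exists e, y e != 0
    & forall j, (j < size F)%N -> lin_form E (nth (fun=> 0) F j) y = 0].
Proof.
move=> T_edges F_lt_T.
have [e0 e0_T] : exists e0, e0 \in T by apply/card_gt0P; apply: leq_ltn_trans F_lt_T.
pose M : 'M[R]_(#|T|, size F) := \matrix_(i, j) nth (fun=> 0) F j (enum_val i).
have : kermx M != 0.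
  by rewrite kermx_eq0 /row_free neq_ltn (leq_ltn_trans (rank_leq_col M)).
case/rowV0Pn => z /sub_kermxP zM z_neq0.
pose y e := if e \in T then z 0 (enum_rank_in e0_T e) else 0.
have y_enum i : y (enum_val i) = z 0 i by rewrite /y enum_valP enum_valK_in.
exists y; split.
- by move=> e /negbTE e_T; rewrite /y e_T.
- have [i z_i] : exists i, z 0 i != 0.
    apply/existsP; apply: contraR z_neq0 => /existsPn z0.
    by apply/eqP/rowP => i; rewrite mxE; apply/eqP/negPn.
  by exists (enum_val i); rewrite y_enum.
- move=> j j_lt; have zMj : (z *m M) 0 (Ordinal j_lt) = 0 by rewrite zM mxE.
  rewrite -[RHS]zMj mxE.
  rewrite /lin_form (bigID (mem T)) /= [X in _ + X]big1 ?addr0; last first.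
    by move=> e /andP[_ /negbTE e_T]; rewrite /y e_T mulr0.
  rewrite (eq_bigl (mem T)) => [|e]; last by rewrite andb_idl // => /T_edges.
  by rewrite big_enum_val; apply: eq_bigr => i _; rewrite y_enum mxE mulrC.
Qed.

End DecisionTrees.

Lemma correct_ordering_lt (R : realType) (V : finType) (E : rel V) (s : V)
    (w1 w2 : weights R V) out x v :
  correct_ordering E s w1 out -> correct_ordering E s w2 out -> x != s -> v != s ->
  dist E s w1 x < dist E s w1 v -> dist E s w2 x < dist E s w2 v.
Proof.
move=> [perm1 sorted1] [_ sorted2] x_s v_s lt1.
have mem_out z : z != s -> z \in out by rewrite (perm_mem perm1) mem_enum !inE.
have lt_trans_dist (w : weights R V) : transitive (fun a b => dist E s w a < dist E s w b).
  by move=> b a c; apply: lt_trans.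
case: (ltngtP (index x out) (index v out)) => [xv|vx|/(congr1 (nth x out))].
- exact: (sorted_ltn_index (lt_trans_dist w2) sorted2 _ _ (mem_out _ x_s) (mem_out _ v_s)).
- have := sorted_ltn_index (lt_trans_dist w1) sorted1 _ _ (mem_out _ v_s) (mem_out _ x_s).
  move=> /(_ vx).
  by rewrite ltNge ltW.
- by rewrite !nth_index ?mem_out // => xv; rewrite xv ltxx in lt1.
Qed.

Definition long_edges (V : finType) (E : rel V) (rk : V -> nat) : {set V * V} :=
  [set e | E e.1 e.2 && (rk e.1 + 2 <= rk e.2)%N].

Section DistanceRank.
Variables (R : realType) (V : finType) (E : rel V) (s : V) (w : weights R V).
Hypotheses (reach : all_reachable E s) (w_gt0 : positive_weights E w)
  (dist_inj : distinct_distances E s w).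

Local Notation d := (dist E s w).

Let w_ge0 : nonneg_weights E w.
Proof. by move=> a b /w_gt0 /ltW. Qed.

Lemma dist_le_walk_weight q : path E s q -> d (last s q) <= walk_weight s w q.
Proof. by move=> q_path; case: (dist_spec w_ge0 (reach (last s q))) => _; apply. Qed.

Lemma dist_ge0 v : 0 <= d v.
Proof.
have [[p [p_path [_ <-]]] _] := dist_spec w_ge0 (reach v).
exact: walk_weight_ge0 w_ge0 p_path.
Qed.

Lemma dist_source : d s = 0.
Proof.
apply/le_anti; rewrite dist_ge0 andbT.
by have := @dist_le_walk_weight [::] isT; rewrite walk_weight_nil.
Qed.

Lemma exists_dist_pred v : v != s -> exists2 u, E u v & d u < d v.
Proof.
move=> v_s; have [[q [q_path [q_last <-]]] _] := dist_spec w_ge0 (reach v).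
case/lastP: q q_path q_last => [_ /= vs|q u]; first by rewrite vs eqxx in v_s.
rewrite rcons_path last_rcons => /andP[q_path uv] <-.
exists (last s q) => //; rewrite walk_weight_rcons.
by rewrite (le_lt_trans (dist_le_walk_weight q_path)) // ltrDl w_gt0.
Qed.

Definition dist_rank x : nat := #|[set z | d z < d x]|.

Lemma dist_rank_ltE a b : (dist_rank a < dist_rank b)%N = (d a < d b).
Proof.
have lt_rank a' b' : d a' < d b' -> (dist_rank a' < dist_rank b')%N.
  move=> ab; apply: proper_card; apply/properP; split.
    by apply/subsetP => z; rewrite !inE => /lt_trans; apply.
  by exists a'; rewrite !inE ?ab ?ltxx.
case: (ltgtP (d a) (d b)) => [/lt_rank //|/lt_rank/ltnW|/dist_inj->].
  by rewrite ltnNge => ->.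
by rewrite ltnn.
Qed.

Lemma dist_rank_inj : injective dist_rank.
Proof.
move=> a b eq_ab; apply: dist_inj; apply/eqP; rewrite eq_le !leNgt.
by rewrite -!dist_rank_ltE eq_ab ltnn.
Qed.

Lemma dist_rank_lt_card x : (dist_rank x < #|V|)%N.
Proof.
rewrite -cardsT; apply: proper_card; apply/properP; split; first exact: subsetT.
by exists x; rewrite !inE ?ltxx.
Qed.

Lemma dist_rank_source : dist_rank s = 0%N.
Proof.
by apply/eqP; rewrite cards_eq0; apply/eqP/setP => z; rewrite !inE dist_source ltNge dist_ge0.
Qed.

Lemma exists_dist_rank_pred v : v != s -> exists2 u, E u v & (dist_rank u < dist_rank v)%N.
Proof. by move=> /exists_dist_pred[u uv lt_uv]; exists u; rewrite ?dist_rank_ltE. Qed.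

Definition dijkstra_parent (u v : V) : V :=
  [arg min_(a < u | E a v) dist_rank a].

Lemma dijkstra_parent_tree_edge u v : E u v -> v != s ->
  dijkstra_tree_edge E s w (dijkstra_parent u v) v.
Proof.
rewrite /dijkstra_parent => uv v_s; case: arg_minnP => // a av min_a.
rewrite /dijkstra_tree_edge v_s av; apply/forallP => b; apply/implyP => /min_a.
by rewrite leq_eqVlt dist_rank_ltE => /predU1P[/dist_rank_inj->|/ltW].
Qed.

Lemma short_forward_edge u v : forward_edge E s w u v ->
  (u, v) \notin long_edges E dist_rank ->
  [/\ dijkstra_tree_edge E s w (dijkstra_parent u v) v,
      (dijkstra_parent u v, v) \in long_edges E dist_rank
    & dist_rank u = (dist_rank v).-1].
Proof.
case/and3P=> uv; rewrite -dist_rank_ltE => lt_uv not_tree; rewrite inE uv /= => not_long.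
have v_s : v != s by apply: contraTneq lt_uv => ->; rewrite dist_rank_source.
have p_tree := dijkstra_parent_tree_edge uv v_s.
have p_u : dijkstra_parent u v != u by apply: contraNneq not_tree => <-.
have : (dist_rank (dijkstra_parent u v) <= dist_rank u)%N.
  by rewrite /dijkstra_parent; case: arg_minnP => // a _; apply.
rewrite leq_eqVlt (inj_eq dist_rank_inj) (negbTE p_u) /= => lt_pu.
rewrite inE /=; case/and3P: (p_tree) => _ -> _; split => //=; move: not_long lt_uv lt_pu.
  by clear; lia.
by clear; lia.
Qed.

(* A forward edge that is not long goes from rank r - 1 to rank r; it is charged
   to the tree edge into its head, which is long as the parent ranks below r - 1. *)
Lemma m_f_le_long_edges : (m_f E s w <= #|long_edges E dist_rank|)%N.
Proof.
rewrite /m_f; set F := [set e | _]; set L := long_edges E dist_rank.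
pose f e := if e \in L then e else (dijkstra_parent e.1 e.2, e.2).
have short_F e : e \in F -> e \notin L -> [/\ f e \notin F, f e \in L
    & dist_rank e.1 = (dist_rank e.2).-1].
  case: e => u v; rewrite /f inE => uv_fwd uv_short; rewrite (negbTE uv_short).
  have [p_tree p_long rank_u] := short_forward_edge uv_fwd uv_short.
  by rewrite inE /forward_edge p_tree !andbF.
have f_inj : {in F &, injective f}.
  move=> e1 e2 F1 F2; rewrite {1 2}/f.
  case: (boolP (e1 \in L)) => L1; case: (boolP (e2 \in L)) => L2.
  - by [].
  - by move=> e12; have [] := short_F _ F2 L2; rewrite /f (negbTE L2) -e12 F1.
  - by move=> e12; have [] := short_F _ F1 L1; rewrite /f (negbTE L1) e12 F2.
  - have [_ _ r1] := short_F _ F1 L1; have [_ _ r2] := short_F _ F2 L2.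
    move: e1 e2 {F1 F2 L1 L2} r1 r2 => [u1 v1] [u2 v2] /= r1 r2 [_ eq_v].
    by subst v2; congr (_, _); apply: dist_rank_inj; rewrite r1 r2.
rewrite -(card_in_imset f_inj); apply/subset_leq_card/subsetP => _ /imsetP[e F_e ->].
case: (boolP (e \in L)) => L_e; first by rewrite /f L_e.
by have [] := short_F _ F_e L_e.
Qed.

End DistanceRank.

Definition long_edges_parity (V : finType) (E : rel V) (rk : V -> nat) (b : bool) :=
  [set e in long_edges E rk | odd (rk e.2) == b].

Lemma card_long_edges (V : finType) (E : rel V) (rk : V -> nat) :
  #|long_edges E rk| = (#|long_edges_parity E rk true| + #|long_edges_parity E rk false|)%N.
Proof.
rewrite -(cardsID [set e | odd (rk e.2)]); congr (_ + _)%N; apply: eq_card => e.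
  by rewrite !inE eqb_id andbC.
by rewrite !inE eqbF_neg andbC.
Qed.

Section RankWeights.
Variables (R : realType) (V : finType) (E : rel V) (s : V) (rk : V -> nat).
Hypotheses (rk_inj : injective rk) (rk_lt_card : forall x, (rk x < #|V|)%N)
  (rk_source : rk s = 0%N)
  (rk_pred : forall v, v != s -> exists2 u, E u v & (rk u < rk v)%N).

(* A rank-increasing edge into z weighs more than twice the height of any vertex
   ranked below z ([height_gap]), and [heavy] exceeds twice every height. *)
Definition height x : R := (4 ^ rk x)%:R - 1.

Definition heavy : R := 3 * (4 ^ #|V|)%:R.

Definition rank_weights (e : V * V) : R :=
  if (rk e.1 < rk e.2)%N then height e.2 - height e.1 else heavy.

Local Notation W := rank_weights.
Local Notation rank_lt := (relpre rk ltn).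

Lemma height_lt a b : (rk a < rk b)%N -> height a < height b.
Proof. by move=> ab; rewrite ltrD2r ltr_nat ltn_exp2l. Qed.

Lemma height_inj : injective height.
Proof.
move=> a b eq_ab; apply: rk_inj.
by case: (ltngtP (rk a) (rk b)) => // /height_lt; rewrite eq_ab ltxx.
Qed.

Lemma height_ge0 x : 0 <= height x.
Proof. by rewrite subr_ge0 ler1n expn_gt0. Qed.

Lemma height_source : height s = 0.
Proof. by rewrite /height rk_source subrr. Qed.

Lemma height_lt_heavy x : 2 * height x < heavy.
Proof.
have : (4 ^ rk x <= 4 ^ #|V|)%N by rewrite leq_exp2l // ltnW.
by rewrite -(ler_nat R) /heavy /height; have := ler0n R (4 ^ #|V|); lra.
Qed.

Lemma height_gap a b c : (rk a < rk c)%N -> (rk b < rk c)%N ->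
  2 * height b < height c - height a.
Proof.
move=> ac bc; have [m cm] : exists m, rk c = m.+1.
  by exists (rk c).-1; rewrite prednK // (leq_ltn_trans _ ac).
have le_m z : (rk z < rk c)%N -> (4 ^ rk z)%:R <= (4 ^ m)%:R :> R.
  by move=> zc; rewrite ler_nat leq_exp2l // -ltnS -cm.
have := le_m _ ac; have := le_m _ bc; have := ler0n R (4 ^ m).
by rewrite /height cm expnS natrM; lra.
Qed.

Lemma rank_weights_gt0 e : 0 < W e.
Proof.
rewrite /W; case: ifP => [/height_lt|_]; first by rewrite subr_gt0.
by have := height_lt_heavy e.1; have := height_ge0 e.1; lra.
Qed.

Lemma rank_weights_pos : positive_weights E W.
Proof. by move=> a c _; apply: rank_weights_gt0. Qed.

Lemma rank_weights_lt a b : (rk a < rk b)%N -> W (a, b) = height b - height a.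
Proof. by rewrite /W /= => ->. Qed.

Lemma height_le_rank_weights a b : height b <= height a + W (a, b).
Proof.
rewrite /W /=; case: ifP => _; first by rewrite addrC subrK.
by have := height_lt_heavy b; have := height_ge0 a; have := height_ge0 b; lra.
Qed.

Lemma height_le_walk_weight x q :
  path E x q -> height (last x q) - height x <= walk_weight x W q.
Proof. exact: walk_weight_ge_potential (fun a b _ => height_le_rank_weights a b). Qed.

Lemma increasing_walk_weight x p : path rank_lt x p ->
  walk_weight x W p = height (last x p) - height x.
Proof. by apply: walk_weight_telescope => a b; apply: rank_weights_lt. Qed.

Lemma exists_increasing_walk x :
  exists p, [/\ path E s p, path rank_lt s p & last s p = x].
Proof.
have [n] := ubnP (rk x); elim: n x => // n IH x /ltnSE rk_x.
have [-> | x_s] := eqVneq x s; first by exists [::].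
have [u ux ltux] := rk_pred x_s; have [p [pE pr pu]] := IH u (leq_trans ltux rk_x).
by exists (rcons p x); rewrite !rcons_path last_rcons pE pr pu /= ux ltux.
Qed.

Lemma rank_reachable x : connect E s x.
Proof. by have [p [pE _ <-]] := exists_increasing_walk x; apply/connectP; exists p. Qed.

Lemma dist_rank_weights x : dist E s W x = height x.
Proof.
apply: is_dist_dist; split.
  have [p [pE pr px]] := exists_increasing_walk x.
  by exists p; rewrite increasing_walk_weight // px height_source subr0.
move=> q qE <-; rewrite -[height _]subr0 -height_source.
exact: height_le_walk_weight.
Qed.

Lemma rank_onto r : (r < #|V|)%N -> exists x, rk x = r.
Proof.
move=> r_lt; pose f x : 'I_#|V| := Ordinal (rk_lt_card x).
have f_inj : injective f by move=> a c /(congr1 val) /rk_inj.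
have := inj_card_onto f_inj (eq_leq (card_ord _)) (Ordinal r_lt).
by case/codomP=> x /(congr1 val) /= ->; exists x.
Qed.

Section Perturbation.
Variables (b : bool) (y : weights R V) (k : R) (u v : V).
Hypotheses (y_out : forall e, e \notin long_edges_parity E rk b -> y e = 0)
  (shift_range : forall e, 0 <= W e + k * y e <= 2 * W e)
  (uv_T : (u, v) \in long_edges_parity E rk b)
  (shift_uv : W (u, v) + k * y (u, v) = 0).

Local Notation w0 := (fun e => W e + k * y e).
Local Notation psi := (dist E s w0).

Let w0_ge0 : nonneg_weights E w0.
Proof. by move=> a c _; case/andP: (shift_range (a, c)). Qed.

Let dist_shift_spec x : is_dist E s w0 x (psi x).
Proof. exact: dist_spec w0_ge0 (rank_reachable x). Qed.

Lemma dist_shift_le_height x : psi x <= 2 * height x.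
Proof.
have [p [pE pr <-]] := exists_increasing_walk x; have [_ min_psi] := dist_shift_spec (last s p).
have : walk_weight s w0 p <= walk_weight s (fun e => 2 * W e) p.
  by apply: ler_walk_weight => e; case/andP: (shift_range e).
rewrite walk_weight_scale increasing_walk_weight // height_source subr0.
exact/le_trans/min_psi.
Qed.

Lemma exists_increasing_shortest_walk x : exists p,
  [/\ path E s p, path rank_lt s p, last s p = x & walk_weight s w0 p = psi x].
Proof.
have [[p [pE [px psi_p]]] _] := dist_shift_spec x; exists p; split => //.
apply: (path_of_light_walk w0_ge0 _ pE (c := heavy)) => [a c ac|]; last first.
  by rewrite psi_p -px (le_lt_trans (dist_shift_le_height _) (height_lt_heavy _)).
apply: contraTT => /= not_lt; rewrite -leNgt y_out; last first.
  rewrite !inE /= negb_and; apply/orP; left; rewrite negb_and; apply/orP; right.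
  by move: not_lt; clear; lia.
by rewrite mulr0 addr0 /W /= (negbTE not_lt).
Qed.

Lemma dist_interpolate (l : R) x : 0 <= l <= 1 ->
  dist E s (fun e => W e + l * k * y e) x = (1 - l) * height x + l * psi x.
Proof.
move=> /andP[l_ge0 l_le1].
have wl_comb q : walk_weight s (fun e => W e + l * k * y e) q =
    (1 - l) * walk_weight s W q + l * walk_weight s w0 q.
  by rewrite -walk_weight_comb; apply: eq_walk_weight => e /=; ring.
apply: is_dist_dist; split.
  have [p [pE pr px psi_p]] := exists_increasing_shortest_walk x.
  by exists p; rewrite wl_comb increasing_walk_weight // px height_source subr0 psi_p.
move=> q qE qx; rewrite wl_comb; apply: lerD; apply: ler_wpM2l; rewrite ?subr_ge0 //.
  by have := height_le_walk_weight qE; rewrite qx height_source subr0.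
by case: (dist_shift_spec x) => _; apply.
Qed.

Lemma dist_shift_reversed x : rk x = (rk v).-1 -> psi v < psi x.
Proof.
move=> rk_x; move: uv_T; rewrite !inE /= => /andP[/andP[uv long_uv] /eqP par_v].
have ux : (rk u < rk x)%N by rewrite rk_x; move: long_uv; clear; lia.
have x_s : x != s by apply: contraTneq ux => ->; rewrite rk_source.
have psi_v : psi v <= 2 * height u.
  have [[p [pE [pu psi_u]]] _] := dist_shift_spec u; have [_ min_v] := dist_shift_spec v.
  have := min_v (rcons p v); rewrite rcons_path pE pu uv last_rcons => /(_ isT erefl).
  rewrite walk_weight_rcons pu /= shift_uv addr0 psi_u => /le_trans; apply.
  exact: dist_shift_le_height.
have [p [pE pr px <-]] := exists_increasing_shortest_walk x.
case/lastP: p pE pr px => [_ _ /= sx|q a]; first by rewrite -sx eqxx in x_s.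
rewrite !rcons_path last_rcons => /andP[qE _] /andP[_ /= ax] eq_ax; subst a.
(* The rank of x has the parity opposite to that of v, so y vanishes on the
   last edge of the walk. *)
rewrite walk_weight_rcons y_out ?mulr0 ?addr0; last first.
  have v_gt0 : (0 < rk v)%N by move: long_uv; clear; lia.
  rewrite !inE /= rk_x -par_v -[in X in _ == X](prednK v_gt0) oddS.
  by case: odd; rewrite andbF.
rewrite rank_weights_lt //; have := height_gap ax ux.
by have := walk_weight_ge0 w0_ge0 qE; lra.
Qed.

Lemma exists_reversing_shift x : rk x = (rk v).-1 -> exists c,
  [/\ positive_weights E (fun e => W e + c * y e),
      distinct_distances E s (fun e => W e + c * y e)
    & dist E s (fun e => W e + c * y e) v < dist E s (fun e => W e + c * y e) x].
Proof.
move=> rk_x; have psi_xv := dist_shift_reversed rk_x.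
have height_xv : height x < height v.
  by apply: height_lt; move: uv_T; rewrite rk_x !inE /= => /andP[/andP[_]]; clear; lia.
set A := height v - height x; set B := psi x - psi v.
have [A_gt0 B_gt0] : 0 < A /\ 0 < B by rewrite !subr_gt0.
have AB_gt0 := addr_gt0 A_gt0 B_gt0.
(* Beyond A / (A + B) the interpolated distances of x and v cross. *)
have l0_lt1 : A / (A + B) < 1 by rewrite ltr_pdivrMr // mul1r ltrDl.
have [l [l0_l l_lt1 l_inj]] := exists_injective_interpolation psi height_inj l0_lt1.
have l_gt0 : 0 < l by apply: le_lt_trans l0_l; rewrite divr_ge0 ?ltW.
have l_in : 0 <= l <= 1 by rewrite !ltW.
exists (l * k); split.
- move=> a c _; have := rank_weights_gt0 (a, c); case/andP: (shift_range (a, c)).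
  by move=> *; rewrite (_ : _ + _ = (1 - l) * W (a, c) + l * (W (a, c) + k * y (a, c)));
    [nra | ring].
- by move=> a c; rewrite !dist_interpolate // => /l_inj.
- rewrite !dist_interpolate //; move: l0_l; rewrite ltr_pdivrMr //.
  by rewrite /A /B; lra.
Qed.

End Perturbation.

Lemma rank_weights_distinct : distinct_distances E s W.
Proof. by move=> a c; rewrite !dist_rank_weights => /height_inj. Qed.

Lemma exists_order_reversing_shift b y :
  (forall e, e \notin long_edges_parity E rk b -> y e = 0) -> (exists e, y e != 0) ->
  exists c x v, [/\ positive_weights E (fun e => W e + c * y e),
    distinct_distances E s (fun e => W e + c * y e), (x != s) && (v != s),
    dist E s W x < dist E s W v
    & dist E s (fun e => W e + c * y e) v < dist E s (fun e => W e + c * y e) x].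
Proof.
move=> y_out y_neq0.
have [k [[u v] [y_uv shift_uv shift_range]]] :=
  exists_cancelling_scale rank_weights_gt0 y_neq0.
have uv_T : (u, v) \in long_edges_parity E rk b.
  by apply: contraR y_uv => /y_out ->; rewrite eqxx.
have rk_v : (1 < rk v)%N by move: uv_T; rewrite !inE /= => /andP[/andP[_]]; clear; lia.
have [x rk_x] := rank_onto (leq_ltn_trans (leq_pred (rk v)) (rk_lt_card v)).
have [c [pos' dist' rev']] := exists_reversing_shift y_out shift_range uv_T shift_uv rk_x.
have xv : (rk x < rk v)%N by rewrite rk_x; move: rk_v; clear; lia.
exists c, x, v; split; rewrite ?dist_rank_weights ?height_lt //.
apply/andP; split; apply/eqP => is_s; move: rk_x rk_v; rewrite is_s rk_source.
  by clear; lia.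
by clear; lia.
Qed.

Lemma long_edges_parity_le_comparisons t b : solves_distance_ordering E s t ->
  (#|long_edges_parity E rk b| <= ldt_comparisons E t W)%N.
Proof.
move=> t_solves; rewrite -size_queries leqNgt; apply/negP => lt_T.
have T_edges : {in long_edges_parity E rk b, forall e, E e.1 e.2}.
  by move=> e; rewrite !inE => /andP[/andP[]].
have [y [y_out y_neq0 y_ker]] := exists_kernel_weights T_edges lt_T.
have [c [x [v [pos' dist' /andP[x_s v_s] lt_W lt']]]] :=
  exists_order_reversing_shift y_out y_neq0.
have out := t_solves W rank_weights_pos rank_weights_distinct.
have := t_solves _ pos' dist'; rewrite ldt_output_shift // => out'.
by have := correct_ordering_lt out out' x_s v_s lt_W; rewrite ltNge ltW.
Qed.

End RankWeights.

Theorem theorem16 :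
  forall R : realType, exists c : R, 0 < c /\
  forall (V : finType) (E : rel V) (s : V) (w : V * V -> R),
    all_reachable E s ->
    positive_weights E w ->
    distinct_distances E s w ->
    forall t : ldt R V, solves_distance_ordering E s t ->
    exists wbar : V * V -> R,
      positive_weights E wbar /\ distinct_distances E s wbar /\
      c * (m_f E s w)%:R <= (ldt_comparisons E t wbar)%:R.
Proof.
move=> R; exists 2^-1; split; first by rewrite invr_gt0 ltr0n.
move=> V E s w reach w_gt0 w_inj t t_solves.
have rk_inj := dist_rank_inj w_inj.
have rk_lt_card := @dist_rank_lt_card R V E s w.
have rk_source := dist_rank_source reach w_gt0.
have rk_pred := exists_dist_rank_pred reach w_gt0 w_inj.
have T_le b :=
  long_edges_parity_le_comparisons rk_inj rk_lt_card rk_source rk_pred b t_solves.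
exists (rank_weights R (dist_rank E s w)); split; first exact: rank_weights_pos.
split; first exact: rank_weights_distinct.
have : (m_f E s w <= 2 * ldt_comparisons E t (rank_weights R (dist_rank E s w)))%N.
  apply: leq_trans (m_f_le_long_edges reach w_gt0 w_inj) _.
  by rewrite card_long_edges mul2n -addnn leq_add.
by rewrite -(ler_nat R) natrM ler_pdivrMl // => ?; lra.
Qed.
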